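(* Let $\Delta\ge2$ and let $G$ be a connected graph on $n$ vertices in which every vertex has degree $\Delta$, except possibly one vertex of degree $\Delta-1$. If $n\ge 2\Delta+1$, then $G$ contains a path on $2\Delta+1$ vertices. *)

From mathcomp Require Import all_boot.
Set Implicit Arguments. Unset Strict Implicit. Unset Printing Implicit Defensive.

Definition simple_graph (T : finType) (e : rel T) : Prop :=
  symmetric e /\ irreflexive e.

Definition deg (T : finType) (e : rel T) (x : T) : nat := #|[set y | e x y]|.

Definition connected_graph (T : finType) (e : rel T) : Prop :=
  forall x y : T, connect e x y.

Definition has_path_on (T : finType) (e : rel T) (k : nat) : Prop :=
  exists (x : T) (p : seq T), path e x p /\ uniq (x :: p) /\ size (x :: p) = k.

From mathcomp Require Import all_boot zify.

(* Grow a simple path one vertex at a time.  A path on n vertices that cannot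
   be prolonged at either end, with n <= deg(first) + deg(last), closes into a
   cycle on the same vertices (Ore's crossing argument); connectivity gives an
   edge leaving that cycle, and opening the cycle there yields a longer path.
   Since every vertex but v0 has degree D, this only fails when v0, of degree
   D - 1, is an end of a path on 2D vertices; a Posa rotation at a second
   neighbour of v0 then produces a path on the same vertices whose ends both
   have degree D.  For D = 2, v0 cannot have degree 1 by the handshake lemma. *)

Set Implicit Arguments.
Unset Strict Implicit.
Unset Printing Implicit Defensive.

Section SimplePaths.
Variables (T : finType) (e : rel T).
Hypotheses (esym : symmetric e) (eirr : irreflexive e).

Definition simple_path (x : T) (p : seq T) := path e x p && uniq (x :: p).

Lemma rev_cons_last (x : T) a : rev (x :: a) = last x a :: rev (belast x a).
Proof. by rewrite lastI rev_rcons. Qed.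

Lemma path_rev_sym x p : path e (last x p) (rev (belast x p)) = path e x p.
Proof. by rewrite rev_path; apply: eq_path => u v; rewrite esym. Qed.

Lemma simple_path_rev x p : simple_path (last x p) (rev (belast x p)) = simple_path x p.
Proof. by rewrite /simple_path path_rev_sym -rev_cons_last rev_uniq. Qed.

Lemma simple_path_cons y x p :
  simple_path y (x :: p) = [&& e y x, y \notin x :: p & simple_path x p].
Proof. by rewrite /simple_path /= -andbA; congr (_ && _); rewrite andbCA. Qed.

Lemma perm_rotate (x : T) a y b :
  perm_eq (last x a :: rev (belast x a) ++ y :: b) (x :: a ++ y :: b).
Proof. by rewrite -cat_cons -rev_cons_last -cat_cons perm_cat2r perm_rev. Qed.

(* Posa rotation: the edge [x y] lets us reverse the segment [x :: a]. *)
Lemma simple_path_rotate x a y b : simple_path x (a ++ y :: b) -> e x y ->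
  simple_path (last x a) (rev (belast x a) ++ y :: b).
Proof.
have lastE : last (last x a) (rev (belast x a)) = x.
  by rewrite -[last _ _]/(last x (last x a :: _)) -rev_cons_last rev_cons last_rcons.
rewrite /simple_path (perm_uniq (perm_rotate x a y b)) !cat_path lastE path_rev_sym /=.
by move=> /andP[/and3P[-> _ ->] ->] ->.
Qed.

Lemma cycle_extend c u v : cycle e c -> uniq c -> u \in c -> e u v -> v \notin c ->
  simple_path v (rot (index u c) c).
Proof.
move=> cyc un uc euv vc; rewrite /simple_path [X in path _ _ X](rot_index uc) /=.
rewrite esym euv /= mem_rot vc rot_uniq un andbT.
by move: cyc; rewrite -(rot_cycle (index u c)) (rot_index uc) /= rcons_path andbT => /andP[].
Qed.

Lemma last_take (x : T) p i : i <= size p -> last x (take i p) = nth x (x :: p) i.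
Proof.
move=> ip; rewrite (last_nth x) size_takel //.
by rewrite -[x :: take i p]/(take i.+1 (x :: p)) nth_take.
Qed.

(* The index sets [A] and [B] below have total size exceeding [size p], so they meet. *)
Lemma crossing_split x p : uniq (x :: p) ->
  (forall y, e x y -> y \in p) -> (forall y, e (last x p) y -> y \in x :: p) ->
  (size p).+1 <= deg e x + deg e (last x p) ->
  exists a y b, [/\ p = a ++ y :: b, e x y & e (last x a) (last x p)].
Proof.
move=> un Nx Nz dsum; set m := size p in dsum *; set z := last x p in Nz dsum *.
pose A := [set i : 'I_m | e x (nth x p i)].
pose B := [set i : 'I_m | e (nth x (x :: p) i) z].
have degA : deg e x <= #|A|.
  apply: leq_trans (leq_imset_card (fun i : 'I_m => nth x p i) A).
  apply/subset_leq_card/subsetP => y; rewrite inE => exy.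
  have yp : index y p < m by rewrite index_mem Nx.
  by apply/imsetP; exists (Ordinal yp); rewrite ?inE /= nth_index ?Nx.
have degB : deg e z <= #|B|.
  apply: leq_trans (leq_imset_card (fun i : 'I_m => nth x (x :: p) i) B).
  apply/subset_leq_card/subsetP => y; rewrite inE => ezy.
  have ys := Nz y ezy.
  have yz : y != z by apply: contraTneq ezy => ->; rewrite eirr.
  have yi : index y (x :: p) < m.
    rewrite ltn_neqAle -ltnS index_mem ys andbT; apply: contra yz => /eqP yi.
    by rewrite -(nth_index x ys) yi /z (last_nth x).
  by apply/imsetP; exists (Ordinal yi); rewrite ?inE /= nth_index // esym.
have /card_gt0P[i] : 0 < #|A :&: B|.
  have : #|A :|: B| <= m by rewrite -[m in _ <= m]card_ord max_card.
  by have := cardsUI A B; lia.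
rewrite !inE => /andP[exi eiz].
exists (take i p), (nth x p i), (drop i.+1 p); split => //.
- by rewrite -drop_nth // cat_take_drop.
- by rewrite last_take // ltnW.
Qed.

Lemma path_exit (s : {pred T}) x p : path e x p -> x \in s -> last x p \notin s ->
  exists u v, [/\ e u v, u \in s & v \notin s].
Proof.
elim: p x => [|y p IH] x /=; first by move=> _ ->.
case/andP=> exy pyp xs; case: (boolP (y \in s)) => [ys|ys]; first exact: IH.
by exists x, y.
Qed.

Lemma exists_notin (s : seq T) : size s < #|T| -> exists w, w \notin s.
Proof.
move=> small; apply/existsP; apply: contraTT small => /existsPn ins.
rewrite -leqNgt; apply: leq_trans (card_size s).
by apply/subset_leq_card/subsetP => w _; have := ins w; rewrite negbK.
Qed.

Lemma simple_path_has_path x p : simple_path x p -> has_path_on e (size p).+1.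
Proof. by case/andP=> pp un; exists x, p. Qed.

Lemma extend_at_head x p : simple_path x p ->
  has_path_on e (size p).+2 \/ forall y, e x y -> y \in p.
Proof.
move=> sp; case: (pickP [pred y | e x y && (y \notin x :: p)]) => [y /andP[exy yn]|Nx].
  by left; apply: (@simple_path_has_path y (x :: p)); rewrite simple_path_cons esym exy yn.
right=> y exy; have := Nx y; rewrite /= exy in_cons => /negbFE /orP[/eqP yx|//].
by move: exy; rewrite yx eirr.
Qed.

Lemma extend_at_last x p : simple_path x p ->
  has_path_on e (size p).+2 \/ forall y, e (last x p) y -> y \in x :: p.
Proof.
rewrite -simple_path_rev => /extend_at_head[|Nz]; first by rewrite size_rev size_belast; left.
by right=> y /Nz; rewrite mem_rev => /mem_belast.
Qed.

Lemma sum_deg_even : ~~ odd (\sum_x deg e x).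
Proof.
pose r := @enum_rank T; pose a x y := nat_of_bool (e x y && (r x < r y)).
have degE x : deg e x = \sum_y (a x y + a y x).
  rewrite /deg -sum1_card big_mkcond /=; apply: eq_bigr => y _; rewrite inE /a.
  case exy: (e x y); rewrite esym exy //=.
  have : r x != r y by rewrite (inj_eq enum_rank_inj); apply: contraTneq exy => ->; rewrite eirr.
  by rewrite -(inj_eq val_inj) /=; case: ltngtP.
rewrite (eq_bigr _ (fun x _ => degE x)).
under eq_bigr => x _ do rewrite big_split.
by rewrite big_split /= [X in _ + X]exchange_big /= addnn odd_double.
Qed.

Lemma odd_deg_not_unique v : (forall x, x != v -> ~~ odd (deg e x)) -> ~~ odd (deg e v).
Proof.
move=> even_deg; have := sum_deg_even; rewrite (bigD1 v) //= oddD.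
suff /negbTE-> : ~~ odd (\sum_(x | x != v) deg e x) by rewrite addbF.
by apply: (big_ind (fun n => ~~ odd n)) => // m n; rewrite oddD => /negbTE-> /negbTE->.
Qed.

Hypothesis conn : connected_graph e.

Lemma simple_path_extend x p : simple_path x p -> (size p).+1 < #|T| ->
  (size p).+1 <= deg e x + deg e (last x p) -> has_path_on e (size p).+2.
Proof.
move=> sp small dsum.
have [//|Nx] := extend_at_head sp.
have [//|Nz] := extend_at_last sp.
have un : uniq (x :: p) by case/andP: sp.
have [a [y [b [pE exy eaz]]]] := crossing_split un Nx Nz dsum.
pose c := last x a :: rev (belast x a) ++ y :: b.
have cp : perm_eq c (x :: p) by rewrite pE perm_rotate.
have csp : simple_path (last x a) (rev (belast x a) ++ y :: b).
  by apply: simple_path_rotate; rewrite -?pE.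
have cyc : cycle e c.
  rewrite /c /= rcons_path; case/andP: csp => -> _ /=.
  by move: eaz; rewrite pE !last_cat /= esym.
have [w wn] := @exists_notin (x :: p) small.
have [u [v [euv uc vn]]] : exists u v, [/\ e u v, u \in c & v \notin c].
  have /connectP[q xq wE] := conn x w.
  by apply: (path_exit xq); rewrite -?wE (perm_mem cp) ?mem_head.
rewrite -[(size p).+2]/(size (x :: p)).+1 -(perm_size cp) -(size_rot (index u c)).
by apply/(@simple_path_has_path v)/cycle_extend; rewrite ?(perm_uniq cp).
Qed.
End SimplePaths.

Section NearlyRegular.
Variables (T : finType) (e : rel T) (D : nat) (v0 : T).
Hypotheses (esym : symmetric e) (eirr : irreflexive e) (conn : connected_graph e).
Hypotheses (D_ge2 : 2 <= D) (deg_other : forall x, x != v0 -> deg e x = D).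
Hypotheses (deg_v0 : deg e v0 = D \/ deg e v0 = D.-1) (card_T : 2 * D + 1 <= #|T|).

Lemma two_le_deg_v0 : 2 <= deg e v0.
Proof.
case: deg_v0 => dv; rewrite dv //.
have [D3|D2] : 3 <= D \/ D = 2 by lia.
  by lia.
have := @odd_deg_not_unique _ _ esym eirr v0; rewrite dv D2 /=; apply.
by move=> x /deg_other ->; rewrite D2.
Qed.

Lemma deg_ge_pred_D x : D.-1 <= deg e x.
Proof. by case: (eqVneq x v0) => [->|/deg_other ->]; [case: deg_v0 => ->|]; lia. Qed.

Lemma short_path_size x p : simple_path e x p -> (size p).+1 <= 2 * D ->
  deg e x + deg e (last x p) < (size p).+1 -> (size p).+1 = 2 * D.
Proof.
case/andP=> _; case: p => [|y p] /= un pD short; first by have := deg_ge_pred_D x; lia.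
have xz : x != last y p by apply: contraNneq (proj1 (andP un)) => ->; exact: mem_last.
have : (x != v0) || (last y p != v0).
  by apply: contraR xz; rewrite negb_or !negbK => /andP[/eqP-> /eqP->].
have := deg_ge_pred_D x; have := deg_ge_pred_D (last y p).
by move=> ? ? /orP[] /deg_other dD; lia.
Qed.

Lemma extend_from_v0 p : simple_path e v0 p -> (size p).+1 = 2 * D -> has_path_on e (2 * D).+1.
Proof.
move=> sp sz; rewrite -sz.
have [//|Nv] := extend_at_head esym eirr sp.
case: p sp sz Nv => [|x1 p] sp sz Nv; first by move: sz => /=; lia.
have [y ey yx1] : exists2 y, e v0 y & y != x1.
  have : 0 < #|[set y | e v0 y] :\ x1|.
    have := cardsD1 x1 [set y | e v0 y]; have := two_le_deg_v0.
    by rewrite /deg; case: (_ \in _); lia.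
  by case/card_gt0P => y; rewrite !inE => /andP[? ?]; exists y.
have yp : y \in p by move: (Nv y ey); rewrite in_cons (negbTE yx1).
case/splitPr: yp sp sz Nv => a b sp sz Nv.
have rsp := simple_path_rotate (a := x1 :: a) esym sp ey.
have qsize : size (rev (belast v0 (x1 :: a)) ++ y :: b) = size (x1 :: a ++ y :: b).
  by have [] := perm_size (perm_rotate v0 (x1 :: a) y b).
have v0_notin : v0 \notin x1 :: a ++ y :: b by case/andP: sp => _ /andP[].
rewrite -qsize; apply: (simple_path_extend esym eirr conn rsp).
  by rewrite qsize; move: sz card_T => /=; lia.
rewrite last_cat /= !deg_other; first by rewrite qsize; move: sz => /=; lia.
- by apply: contraNneq v0_notin => <-; rewrite -cat_cons mem_cat mem_last orbT.
- by apply: contraNneq v0_notin => <-; rewrite -cat_cons mem_cat mem_last.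
Qed.

Lemma has_path_on_succ k : k <= 2 * D -> has_path_on e k -> has_path_on e k.+1.
Proof.
move=> kD [x [p [px [un sk]]]]; subst k; move: kD => /= kD.
have sp : simple_path e x p by apply/andP.
have [long|short] := leqP (size p).+1 (deg e x + deg e (last x p)).
  by apply: (simple_path_extend esym eirr conn sp) => //; lia.
have sz := short_path_size sp kD short.
case: (eqVneq x v0) => [xv|xv]; first by rewrite sz; subst x; exact: extend_from_v0 sp sz.
have zv : last x p = v0.
  apply/eqP; apply: contraTT short => zv.
  by rewrite -leqNgt !deg_other //; lia.
rewrite sz; apply: (@extend_from_v0 (rev (belast x p))).
  by rewrite -zv simple_path_rev.
by rewrite size_rev size_belast.
Qed.
End NearlyRegular.

Theorem lemma3p2 (T : finType) (e : rel T) (D : nat) :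
  simple_graph e -> connected_graph e -> 2 <= D ->
  (exists v0 : T, (forall x, x != v0 -> deg e x = D) /\
                  (deg e v0 = D \/ deg e v0 = D.-1)) ->
  2 * D + 1 <= #|T| ->
  has_path_on e (2 * D + 1).
Proof.
move=> [esym eirr] conn D_ge2 [v0 [deg_other deg_v0]] card_T.
have path_succ := has_path_on_succ esym eirr conn D_ge2 deg_other deg_v0 card_T.
suff path_le k : k <= 2 * D -> has_path_on e k.+1 by rewrite addn1; exact: path_le.
elim: k => [|k IH] kD; first by exists v0, [::].
exact: path_succ kD (IH (ltnW kD)).
Qed.
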